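(* Assume (H), (U) and (SC). Let $x>0$ and let $a_x\in[-x/\bar z,x/\underline z]$ be a maximizer in $v(x)=\sup_{a\in[-x/\bar z,x/\underline z]}\hat v(0,x,a)$. Then $D^+v(x)\subseteq D^+_x\hat v(0,x,a_x)$, where $D^+_x\hat v(0,x,a_x)$ denotes the superdifferential of $y\mapsto\hat v(0,y,a_x)$ on $[l(a_x),\infty)$ at the point $x$.
   Context: Standing setup. Fix constants $\lambda>0$, $\rho>0$. On a filtered probability space $(\Omega,\mathcal F,(\mathcal F_t)_{t\ge0},\mathbb P)$ let $0=\tau_0<\tau_1<\tau_2<\cdots$ be random times and $(Z_k)_{k\ge1}$ random variables with values in $(-1,\infty)$. Assumption (H): (a) $(\tau_k)_{k\ge1}$ are the jump times of a Poisson process with intensity $\lambda$; (b) for each $k\ge1$, conditionally on $\tau_k-\tau_{k-1}=t$, $Z_k$ is independent of $\{\tau_i,Z_i\}_{i<k}$ and has law $p(t,dz)$, where for every $t\ge0$ the support of $p(t,dz)$ is either an interval with interior $(-\underline z,\bar z)$ or a finite set with smallest element $-\underline z$ and largest element $\bar z$, with $\underline z\in(0,1]$, $\bar z\in(0,\infty]$ ($\bar z<\infty$ in the finite case); (c) $\int z\,p(t,dz)\ge 0$ and $\int(1+z)\,p(t,dz)\le k e^{bt}$ for all $t\ge0$, for some constants $k,b\ge0$; (d) $t\mapsto\int w(z)\,p(t,dz)$ is continuous on $[0,\infty)$ for every measurable $w$ on $(-\underline z,\bar z)$ with linear growth. Assumption (U): $U:[0,\infty)\to\mathbb R$ is strictly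 increasing, strictly concave, $C^1$ on $(0,\infty)$, $U(0)=0$, $U'(0^+)=+\infty$, $U'(+\infty)=0$, $U(x)\le K_1x^\gamma$ for all $x\ge0$ for some $K_1>0$, $\gamma\in(0,1)$, and $\rho>b\gamma+\lambda(k^\gamma\underline z^{-\gamma}-1)$. Original problem: $\mathcal G_t=\sigma\{(\tau_k,Z_k):\tau_k\le t\}$. A control $(\alpha,c)$ consists of real $\alpha_k$, $k\ge1$, with $\alpha_k$ $\mathcal G_{\tau_{k-1}}$-measurable, and a nonnegative $(\mathcal G_t)$-predictable process $c$. For $x\ge0$ the wealth is $X^x_0=x$, $X^x_k=x-\int_0^{\tau_k}c_t\,dt+\sum_{i=1}^k\alpha_iZ_i$; $(\alpha,c)\in\mathcal A(x)$ if $X^x_k\ge0$ a.s. for all $k\ge1$. $v(x)=\sup_{(\alpha,c)\in\mathcal A(x)}\mathbb E\int_0^\infty e^{-\rho t}U(c_t)\,dt$. Auxiliary problem: $l(a)=\max(a\underline z,-a\bar z)$ (with $l(a)=a\underline z$ if $\bar z=\infty$); $A=\mathbb R$ if $\bar z<\infty$ and $A=[0,\infty)$ if $\bar z=\infty$; $\mathcal X=\{(x,a)\in[0,\infty)\times A: x\ge l(a)\}$, $\mathcal D=[0,\infty)\times\mathcal X$; $g(t,x,a)=\lambda\int v(x+az)\,p(t,dz)$. For $(t,x,a)\in\mathcal D$, $\mathcal C_a(t,x)$ is the set of deterministic measurable $c:[t,\infty)\to[0,\infty)$ with $\int_t^s c_u\,du\le x-l(a)$ for all $s\ge t$, with state $Y_s=x-\int_t^s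 c_u\,du$; $\hat v(t,x,a)=\sup_{c\in\mathcal C_a(t,x)}\int_t^\infty e^{-(\rho+\lambda)(s-t)}[U(c_s)+g(s,Y_s,a)]\,ds$. It is known that $v(x)=\sup_{a\in[-x/\bar z,\,x/\underline z]}\hat v(0,x,a)$ (with $-x/\bar z:=0$ if $\bar z=\infty$). Superdifferential: for a continuous real function $u$ on a set $S\subset\mathbb R^n$ and $y\in S$, $D^+u(y)=\{p\in\mathbb R^n:\limsup_{z\in S,z\to y}\frac{u(z)-u(y)-\langle p,z-y\rangle}{|z-y|}\le0\}$. Semiconcavity: $u:S\to\mathbb R$, $S\subset\mathbb R^n$, is semiconcave if there is a nondecreasing upper semicontinuous $\omega:[0,\infty)\to[0,\infty)$ with $\omega(r)\to0$ as $r\to0^+$ such that $\eta u(x_1)+(1-\eta)u(x_2)-u(\eta x_1+(1-\eta)x_2)\le\eta(1-\eta)|x_1-x_2|\,\omega(|x_1-x_2|)$ for all $\eta\in[0,1]$ and all $x_1,x_2$ with segment $[x_1,x_2]\subset S$; locally semiconcave means semiconcave on every compact subset of the domain. Assumption (SC): for every $a\in A\setminus\{0\}$ and every continuous function $w$ on $\mathbb R$ with linear growth, the map $(t,x)\mapsto\lambda\int w(x+az)\,p(t,dz)$ is locally semiconcave on $(0,\infty)\times(l(a),\infty)$. *)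

From HB Require Import structures.
From mathcomp Require Import all_boot all_order all_algebra.
From mathcomp Require Import all_classical all_reals all_analysis.
Set Implicit Arguments. Unset Strict Implicit. Unset Printing Implicit Defensive.
Import Order.TTheory GRing.Theory Num.Theory.
Import numFieldNormedType.Exports.
Local Open Scope classical_set_scope.
Local Open Scope ring_scope.

Section Defs.
Variable R : realType.

Definition msupport (mu : set R -> \bar R) : set R :=
  [set z | forall e : R, 0 < e -> (0 < mu (ball z e))%E].

Definition lfun (zl : R) (zb : \bar R) (a : R) : R :=
  match zb with
  | EFin r => Num.max (a * zl) (- (a * r))
  | _ => a * zl
  end.

Definition Aset (zb : \bar R) : set R :=
  match zb with
  | EFin _ => setT
  | _ => [set a | 0 <= a]
  end.

Definition Iset (zl : R) (zb : \bar R) (x : R) : set R :=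
  match zb with
  | EFin r => [set a | - x / r <= a <= x / zl]
  | _ => [set a | 0 <= a <= x / zl]
  end.

Definition gfun (lam : R) (p : R -> probability R R) (v : R -> R)
  (t y a : R) : \bar R :=
  (lam%:E * \int[p t]_z (v (y + a * z))%:E)%E.

Definition Cset (zl : R) (zb : \bar R) (t y a : R) : set (R -> R) :=
  [set c : R -> R | measurable_fun `[t, +oo[ c /\ (forall s, t <= s -> 0 <= c s) /\
     forall s, t <= s ->
       (\int[lebesgue_measure]_(u in `[t, s]) (c u)%:E <= (y - lfun zl zb a)%:E)%E].

Definition Ystate (c : R -> R) (t y s : R) : R :=
  y - fine (\int[lebesgue_measure]_(u in `[t, s]) (c u)%:E)%E.

Definition Jfun (lam rho : R) (p : R -> probability R R) (U v : R -> R)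
  (t y a : R) (c : R -> R) : \bar R :=
  (\int[lebesgue_measure]_(s in `[t, +oo[)
     ((expR (- (rho + lam) * (s - t)))%:E *
        ((U (c s))%:E + gfun lam p v s (Ystate c t y s) a)))%E.

Definition vhat (lam rho : R) (p : R -> probability R R) (U v : R -> R)
  (zl : R) (zb : \bar R) (t y a : R) : \bar R :=
  ereal_sup [set Jfun lam rho p U v t y a c | c in Cset zl zb t y a].

(** Superdifferential of u : R -> R on S at y (the limsup <= 0 condition unfolded). *)
Definition superdiff (u : R -> R) (S : set R) (y q : R) : Prop :=
  forall e : R, 0 < e -> exists2 d : R, 0 < d &
    forall z, S z -> 0 < `|z - y| < d ->
      u z - u y - q * (z - y) <= e * `|z - y|.

Definition edist2 (P Q : R * R) : R :=
  Num.sqrt ((P.1 - Q.1) ^+ 2 + (P.2 - Q.2) ^+ 2).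

Definition cvx2 (eta : R) (P Q : R * R) : R * R :=
  (eta * P.1 + (1 - eta) * Q.1, eta * P.2 + (1 - eta) * Q.2).

Definition modulus (om : R -> R) : Prop :=
  (forall r, 0 <= r -> 0 <= om r) /\
  (forall r s, 0 <= r -> r <= s -> om r <= om s) /\
  (forall r, 0 <= r -> forall e, 0 < e -> exists2 d, 0 < d &
      forall s, 0 <= s -> `|s - r| < d -> om s < om r + e) /\
  (om r @[r --> 0^'+] --> 0).

Definition semiconcave2 (S : set (R * R)) (u : R * R -> R) : Prop :=
  exists2 om : R -> R, modulus om &
    forall (eta : R) (P Q : R * R), 0 <= eta <= 1 ->
      (forall th : R, 0 <= th <= 1 -> S (cvx2 th P Q)) ->
      eta * u P + (1 - eta) * u Q - u (cvx2 eta P Q)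
        <= eta * (1 - eta) * edist2 P Q * om (edist2 P Q).

Definition loc_semiconcave2 (O : set (R * R)) (u : R * R -> R) : Prop :=
  forall K : set (R * R), compact K -> K `<=` O -> semiconcave2 K u.

Definition linear_growth (w : R -> R) : Prop :=
  exists C : R, forall z, `|w z| <= C * (1 + `|z|).

End Defs.

From HB Require Import structures.
From mathcomp Require Import all_boot all_order all_algebra.
From mathcomp Require Import all_classical all_reals all_analysis.
From mathcomp Require Import lra.
Set Implicit Arguments. Unset Strict Implicit. Unset Printing Implicit Defensive.
Import Order.TTheory GRing.Theory Num.Theory.
Import numFieldNormedType.Exports.
Local Open Scope classical_set_scope.
Local Open Scope ring_scope.

(* The control a_x is admissible for every wealth y >= l(a_x), so
   y |-> vhat(0, y, a_x) lies below v on [l(a_x), oo) and touches it at x.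
   A function touching another from below at a point inherits all of its
   superdifferentials there. *)

Section Superdifferential.
Variable R : realType.

Lemma superdiff_touch_below (u w : R -> R) (S T : set R) (y q : R) :
  T `<=` S -> (forall z, T z -> u z <= w z) -> u y = w y ->
  superdiff w S y q -> superdiff u T y q.
Proof.
move=> TS uw uyw sdw e e0; have [d d0 hd] := sdw e e0.
exists d => // z Tz zyd; apply: le_trans (hd z (TS z Tz) zyd).
by rewrite uyw !lerD2r uw.
Qed.

End Superdifferential.

Section AdmissibleControls.
Variables (R : realType) (zl : R) (zb : \bar R).
Hypotheses (zl_gt0 : 0 < zl) (zb_gt0 : (0 < zb)%E).

Lemma Iset_Aset (x a : R) : Iset zl zb x a -> Aset zb a.
Proof. by case: zb => [r||] //= /andP[]. Qed.

Lemma lfun_ge0 (a : R) : Aset zb a -> 0 <= lfun zl zb a.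
Proof.
move: zb_gt0; case: zb => [r||] //= r_gt0 a_ge0; last by rewrite mulr_ge0 // ltW.
rewrite lte_fin in r_gt0; rewrite le_max.
have [a0|a0] := leP 0 a; first by rewrite mulr_ge0 // ltW.
by rewrite oppr_ge0 nmulr_rle0 // (ltW r_gt0) orbT.
Qed.

Lemma Iset_lfun_le (a y : R) : Aset zb a -> lfun zl zb a <= y -> Iset zl zb y a.
Proof.
move: zb_gt0; case: zb => [r||] //= r_gt0 a_ge0.
- rewrite lte_fin in r_gt0; rewrite ge_max => /andP[ay ray].
  by rewrite ler_pdivrMr // ler_pdivlMr //; apply/andP; split; lra.
- by rewrite a_ge0 ler_pdivlMr.
Qed.

End AdmissibleControls.

Lemma fine_le_nonneg (R : realType) (e : \bar R) (r : R) :
  0 <= r -> (e <= r%:E)%E -> fine e <= r.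
Proof. by case: e => [s||] //= r_ge0; rewrite ?lee_fin ?leye_eq. Qed.

Theorem lemma4p2 (R : realType) (lam rho : R) (p : R -> probability R R)
  (zl : R) (zb : \bar R) (kk b : R) (U : R -> R) (K1 gam : R) (v : R -> R)
  (x ax : R) :
  0 < lam -> 0 < rho ->
  (* (H)(b): support of p(t,.) *)
  0 < zl <= 1 -> (0 < zb)%E ->
  (forall t, 0 <= t ->
     ((forall z1 z2 z, msupport (p t) z1 -> msupport (p t) z2 -> z1 <= z <= z2 ->
         msupport (p t) z) /\
      interior (msupport (p t)) = [set z | - zl < z /\ (z%:E < zb)%E])
     \/
     (exists2 r : R, zb = r%:E &
        [/\ finite_set (msupport (p t)), msupport (p t) (- zl), msupport (p t) r &
            forall z, msupport (p t) z -> - zl <= z <= r])) ->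
  (* the marks take values in (-1, oo) *)
  (forall t, 0 <= t -> p t [set z | z <= -1] = 0%E) ->
  (* (H)(c) *)
  0 <= kk -> 0 <= b ->
  (forall t, 0 <= t -> (0 <= \int[p t]_z z%:E)%E) ->
  (forall t, 0 <= t -> (\int[p t]_z (1 + z)%:E <= (kk * expR (b * t))%:E)%E) ->
  (* (H)(d) *)
  (forall w : R -> R, measurable_fun setT w -> linear_growth w ->
     {within `[0, +oo[, continuous (fun t => fine (\int[p t]_z (w z)%:E)%E)}) ->
  (* (U) *)
  (forall y1 y2, 0 <= y1 -> y1 < y2 -> U y1 < U y2) ->
  (forall y1 y2 th, 0 <= y1 -> 0 <= y2 -> y1 != y2 -> 0 < th < 1 ->
     th * U y1 + (1 - th) * U y2 < U (th * y1 + (1 - th) * y2)) ->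
  (forall y : R, 0 < y -> derivable U y 1) ->
  (forall y : R, 0 < y -> derive1 U z @[z --> y] --> derive1 U y) ->
  U 0 = 0 ->
  derive1 U y @[y --> (0:R)^'+] --> +oo ->
  derive1 U y @[y --> +oo] --> (0:R) ->
  0 < K1 -> 0 < gam < 1 ->
  (forall y, 0 <= y -> U y <= K1 * y `^ gam) ->
  b * gam + lam * (kk `^ gam * zl `^ (- gam) - 1) < rho ->
  (* (SC) *)
  (forall a, Aset zb a -> a != 0 ->
     forall w : R -> R, continuous w -> linear_growth w ->
       loc_semiconcave2 [set P : R * R | 0 < P.1 /\ lfun zl zb a < P.2]
         (fun P => lam * fine (\int[p P.1]_z (w (P.2 + a * z))%:E)%E)) ->
  (* v is the (nonnegative) value function, characterised by the known relation *)
  (forall y, 0 <= v y) ->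
  (forall y, 0 <= y ->
     (v y)%:E = ereal_sup [set vhat lam rho p U v zl zb 0 y a | a in Iset zl zb y]) ->
  (* x > 0 and a_x a maximiser *)
  0 < x ->
  Iset zl zb x ax ->
  vhat lam rho p U v zl zb 0 x ax = (v x)%:E ->
  forall q : R, superdiff v [set y | 0 <= y] x q ->
    superdiff (fun y => fine (vhat lam rho p U v zl zb 0 y ax))
              [set y | lfun zl zb ax <= y] x q.
Proof.
move=> _ _ /andP[zl_gt0 _] zb_gt0 _ _ _ _ _ _ _ _ _ _ _ _ _ _ _ _ _ _ _
  v_ge0 v_sup _ Iax vhat_x q.
have Aax := Iset_Aset Iax.
have lfun_le_ge0 y : lfun zl zb ax <= y -> 0 <= y.
  by apply: le_trans; exact: (lfun_ge0 zl_gt0 zb_gt0).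
apply: (superdiff_touch_below (w := v) (S := [set y | 0 <= y])).
- by move=> y /lfun_le_ge0.
- move=> y ly; apply: fine_le_nonneg => //.
  rewrite v_sup; last exact: lfun_le_ge0.
  by apply: ereal_sup_ubound; exists ax => //; exact: Iset_lfun_le.
- by rewrite vhat_x.
Qed.
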